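(* Let $\mathscr{M}$ be a von Neumann algebra. A unitary $U \in \mathscr{M}$ can be written as the product of two symmetries in $\mathscr{M}$ if and only if there is a unitary $W \in \mathscr{M}$ such that $U^* = W^*UW$, i.e. $U$ and $U^*$ are unitarily equivalent in $\mathscr{M}$.
   Context: A symmetry is a self-adjoint unitary. *)

From HB Require Import structures.
From mathcomp Require Import all_boot all_order all_algebra.
From mathcomp Require Import complex.
From mathcomp Require Import reals.
Set Implicit Arguments. Unset Strict Implicit. Unset Printing Implicit Defensive.
Import Order.TTheory GRing.Theory Num.Theory.
Local Open Scope ring_scope.

Section HilbertDefs.
Variables (R : realType) (H : lmodType R[i]) (ip : H -> H -> R[i]).

Definition hnorm (x : H) : R := Num.sqrt (complex.Re (ip x x)).

Definition hcauchy (u : nat -> H) : Prop :=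
  forall e : R, 0 < e -> exists N : nat,
    forall m n, (N <= m)%N -> (N <= n)%N -> hnorm (u m - u n) < e.

Definition hconverges (u : nat -> H) : Prop :=
  exists x : H, forall e : R, 0 < e -> exists N : nat,
    forall n, (N <= n)%N -> hnorm (u n - x) < e.

Definition is_hilbert_space : Prop :=
  [/\ (forall (a : R[i]) (x y z : H), ip (a *: x + y) z = a * ip x z + ip y z),
      (forall x y : H, ip y x = conjc (ip x y)),
      (forall x : H, 0 <= ip x x),
      (forall x : H, ip x x = 0 -> x = 0) &
      (forall u : nat -> H, hcauchy u -> hconverges u)].

Definition is_bounded_op (T : H -> H) : Prop :=
  (forall (a : R[i]) (x y : H), T (a *: x + y) = a *: T x + T y) /\
  exists C : R, forall x : H, hnorm (T x) <= C * hnorm x.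

Definition is_adjoint (T T' : H -> H) : Prop :=
  forall x y : H, ip (T x) y = ip x (T' y).

Definition commutant (S : (H -> H) -> Prop) : (H -> H) -> Prop :=
  fun T => is_bounded_op T /\ forall A, S A -> T \o A = A \o T.

Definition is_von_neumann_algebra (M : (H -> H) -> Prop) : Prop :=
  (forall T, M T -> is_bounded_op T /\ exists T', is_adjoint T T' /\ M T') /\
  (forall T, M T <-> commutant (commutant M) T).

Definition op_unitary (U : H -> H) : Prop :=
  is_bounded_op U /\
  exists U', is_adjoint U U' /\ U' \o U = id /\ U \o U' = id.

Definition op_symmetry (S : H -> H) : Prop :=
  op_unitary S /\ is_adjoint S S.

End HilbertDefs.

(* Write [T'] for the adjoint of [T].  If [U = S1 S2] with symmetries [S1], [S2], then
   [S1 U S1 = S2 S1 = U'].  Conversely, let [W' U W = U'] with [W] unitary in [M].  Then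
   [A = (W + W') / 2] is a self-adjoint contraction with [A U = U' A]; hence [U] commutes
   with [A ^ 2] and with [|A| = sqrt (A ^ 2)].  Let [S] be [1] and [-1] on the supports of
   the positive and negative parts of [A], and [i W] on [ker A], where [W' = - W].  Then
   [S] is a symmetry in the bicommutant of [{W, W'}], hence in [M]; it exchanges [|A|]
   and [A], which forces [S U = U' S], so that [U = S (S U)] with [S U] a symmetry.  The
   square root and the projections are strong limits of monotone iterations, so no
   spectral theorem is needed. *)

From HB Require Import structures.
From mathcomp Require Import all_boot all_order all_algebra.
From mathcomp Require Import complex.
From mathcomp Require Import reals.
From mathcomp Require Import ring lra.
From Stdlib Require Import ClassicalEpsilon Classical FunctionalExtensionality.
Import Order.TTheory GRing.Theory Num.Theory.
Set Implicit Arguments. Unset Strict Implicit. Unset Printing Implicit Defensive.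
Local Open Scope ring_scope.
Local Open Scope complex_scope.

Section HilbertSpace.
Variables (R : realType) (H : lmodType R[i]) (ip : H -> H -> R[i]).
Hypothesis hH : is_hilbert_space ip.

Local Notation hn := (hnorm ip).
Local Notation Re := complex.Re.
Local Notation Im := complex.Im.

Lemma ip_linearl a x y z : ip (a *: x + y) z = a * ip x z + ip y z.
Proof. by case: hH. Qed.

Lemma ip_sym x y : ip y x = conjc (ip x y).
Proof. by case: hH. Qed.

Lemma ip_ge0 x : 0 <= ip x x.
Proof. by case: hH. Qed.

Lemma ip_eq0 x : ip x x = 0 -> x = 0.
Proof. by case: hH => _ _ _ + _; apply. Qed.

Lemma hcomplete u : hcauchy ip u -> hconverges ip u.
Proof. by case: hH => _ _ _ _; apply. Qed.

Lemma ipDl x y z : ip (x + y) z = ip x z + ip y z.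
Proof. by rewrite -{1}[x]scale1r ip_linearl mul1r. Qed.

Lemma ip0l z : ip 0 z = 0.
Proof. by have := ipDl 0 0 z; rewrite addr0 -{1}[ip 0 z]addr0 => /addrI <-. Qed.

Lemma ipZl a x z : ip (a *: x) z = a * ip x z.
Proof. by rewrite -[a *: x]addr0 ip_linearl ip0l addr0. Qed.

Lemma ipNl x z : ip (- x) z = - ip x z.
Proof. by rewrite -scaleN1r ipZl mulN1r. Qed.

Lemma ipBl x y z : ip (x - y) z = ip x z - ip y z.
Proof. by rewrite ipDl ipNl. Qed.

Lemma ip0r z : ip z 0 = 0.
Proof. by rewrite ip_sym ip0l rmorph0. Qed.

Lemma ipDr x y z : ip x (y + z) = ip x y + ip x z.
Proof. by rewrite ip_sym ipDl rmorphD /= -!ip_sym. Qed.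

Lemma ipZr a x z : ip x (a *: z) = conjc a * ip x z.
Proof. by rewrite ip_sym ipZl rmorphM /= -ip_sym. Qed.

Lemma ipNr x z : ip x (- z) = - ip x z.
Proof. by rewrite ip_sym ipNl rmorphN /= -ip_sym. Qed.

Lemma ipBr x y z : ip x (y - z) = ip x y - ip x z.
Proof. by rewrite ipDr ipNr. Qed.

Lemma double_inj (v w : H) : v + v = w + w -> v = w.
Proof.
move/eqP; rewrite -subr_eq0 opprD addrACA -mulr2n -scaler_nat scaler_eq0 pnatr_eq0 orFb.
by rewrite subr_eq0 => /eqP.
Qed.

Lemma ipr_inj a b : (forall x, ip x a = ip x b) -> a = b.
Proof.
by move=> eq_ab; apply/eqP; rewrite -subr_eq0; apply/eqP/ip_eq0; rewrite ipBr eq_ab subrr.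
Qed.

Lemma ReD (a b : R[i]) : Re (a + b) = Re a + Re b.
Proof. by case: a; case: b. Qed.

Lemma ReB (a b : R[i]) : Re (a - b) = Re a - Re b.
Proof. by case: a; case: b. Qed.

Lemma ImB (a b : R[i]) : Im (a - b) = Im a - Im b.
Proof. by case: a; case: b. Qed.

Lemma ReJ (a : R[i]) : Re (conjc a) = Re a.
Proof. by case: a. Qed.

Lemma conjc_i : conjc 'i = - 'i :> R[i].
Proof. by apply/eqP; rewrite eq_complex /= oppr0 !eqxx. Qed.

Lemma hnorm_ge0 x : 0 <= hn x.
Proof. exact: sqrtr_ge0. Qed.

Lemma ipxx x : ip x x = (hn x ^+ 2)%:C.
Proof.
rewrite sqr_sqrtr; last by have := ip_ge0 x; rewrite lecE => /andP[].
by have := ip_ge0 x; case: (ip x x) => a b; rewrite lecE /= => /andP[/eqP-> _].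
Qed.

Lemma hnorm_sqr x : hn x ^+ 2 = Re (ip x x).
Proof. by rewrite ipxx. Qed.

Lemma hnorm_eq0 x : hn x = 0 -> x = 0.
Proof. by move=> x0; apply: ip_eq0; rewrite ipxx x0 expr0n. Qed.

Lemma hnorm0 : hn 0 = 0.
Proof. by rewrite /hnorm ip0l sqrtr0. Qed.

Lemma hnormN x : hn (- x) = hn x.
Proof. by rewrite /hnorm ipNl ipNr opprK. Qed.

Lemma hnormZ a x : hn (a *: x) = Num.sqrt (Re a ^+ 2 + Im a ^+ 2) * hn x.
Proof.
rewrite /hnorm -sqrtrM ?addr_ge0 ?sqr_ge0 // ipZl ipZr ipxx.
by congr Num.sqrt; case: a => p q /=; ring.
Qed.

Lemma hnormZr (r : R) x : hn (r%:C *: x) = `|r| * hn x.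
Proof. by rewrite hnormZ /= expr0n addr0 sqrtr_sqr. Qed.

Lemma hnormZi x : hn ('i *: x) = hn x.
Proof. by rewrite hnormZ /= expr0n expr1n add0r sqrtr1 mul1r. Qed.

Lemma hnormD_sqr x y : hn (x + y) ^+ 2 = hn x ^+ 2 + hn y ^+ 2 + 2 * Re (ip x y).
Proof. by rewrite !hnorm_sqr ipDl !ipDr !ReD (ip_sym x y) ReJ; ring. Qed.

Lemma hnormB_sqr x y : hn (x - y) ^+ 2 = hn x ^+ 2 + hn y ^+ 2 - 2 * Re (ip x y).
Proof. by rewrite !hnorm_sqr ipBl !ipBr !ReB (ip_sym x y) ReJ; ring. Qed.

Lemma hnorm_gt0 x : x != 0 -> 0 < hn x.
Proof. by move=> x0; rewrite lt_def hnorm_ge0 andbT; apply: contra_neq x0 => /hnorm_eq0. Qed.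

Lemma Re_ip_le x y : Re (ip x y) <= hn x * hn y.
Proof.
have [->|/hnorm_gt0 xpos] := eqVneq x 0; first by rewrite ip0l hnorm0 mul0r.
have [->|/hnorm_gt0 ypos] := eqVneq y 0; first by rewrite ip0r hnorm0 mulr0.
(* Cauchy-Schwarz, from [0 <= |(hn y) x - (hn x) y|^2]. *)
have := sqr_ge0 (hn ((hn y)%:C *: x - (hn x)%:C *: y)).
rewrite hnormB_sqr !hnormZr ipZl ipZr conjc_real !ger0_norm ?hnorm_ge0 //.
have -> : Re ((hn y)%:C * ((hn x)%:C * ip x y)) = hn y * hn x * Re (ip x y).
  by case: (ip x y) => p q /=; ring.
have := mulr_gt0 xpos ypos; nra.
Qed.

Lemma norm_Re_ip_le x y : `|Re (ip x y)| <= hn x * hn y.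
Proof.
rewrite ler_norml Re_ip_le andbT lerNl.
by have := Re_ip_le x (- y); rewrite ipNr hnormN; case: (ip x y).
Qed.

Lemma norm_Im_ip_le x y : `|Im (ip x y)| <= hn x * hn y.
Proof.
have := norm_Re_ip_le x ('i *: y); rewrite hnormZi ipZr.
by case: (ip x y) => p q /=; rewrite mul0r mulN1r opprK add0r.
Qed.

Lemma hnormD x y : hn (x + y) <= hn x + hn y.
Proof.
rewrite -ler_sqr ?nnegrE ?addr_ge0 ?hnorm_ge0 // hnormD_sqr.
have := Re_ip_le x y; nra.
Qed.

Lemma hdistC x y : hn (x - y) = hn (y - x).
Proof. by rewrite -hnormN opprB. Qed.

Lemma ler_hdistD x y z : hn (x - z) <= hn (x - y) + hn (y - z).
Proof. by have := hnormD (x - y) (y - z); rewrite addrA subrK. Qed.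

Lemma hnorm_lt_sqr x e : 0 < e -> hn x ^+ 2 < e ^+ 2 -> hn x < e.
Proof. by move=> e0; rewrite ltr_sqr ?nnegrE ?hnorm_ge0 ?ltW. Qed.

Definition hcvg_to (u : nat -> H) (l : H) : Prop :=
  forall e : R, 0 < e -> exists N : nat, forall n, (N <= n)%N -> hn (u n - l) < e.

Definition hlim (u : nat -> H) : H := epsilon (inhabits 0) (hcvg_to u).

Lemma hcvg_unique u a b : hcvg_to u a -> hcvg_to u b -> a = b.
Proof.
move=> ua ub; apply/eqP; rewrite -subr_eq0; apply/eqP/hnorm_eq0/eqP.
rewrite eq_le hnorm_ge0 andbT; apply/ler_addgt0Pr => e e0; rewrite add0r.
have e2 : 0 < e / 2 by rewrite divr_gt0.
have [N1 uN1] := ua _ e2; have [N2 uN2] := ub _ e2.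
have := uN1 _ (leq_maxl N1 N2); have := uN2 _ (leq_maxr N1 N2).
have := ler_hdistD a (u (maxn N1 N2)) b; rewrite (hdistC a (u _)); lra.
Qed.

Lemma hlimE u l : hcvg_to u l -> hlim u = l.
Proof.
move=> ul; apply: (hcvg_unique _ ul).
by apply: (epsilon_spec (inhabits 0) (hcvg_to u)); exists l.
Qed.

Lemma hcauchy_cvg u : hcauchy ip u -> hcvg_to u (hlim u).
Proof. by move=> /hcomplete[l ul]; rewrite (hlimE ul). Qed.

Lemma hcvg_cst c : hcvg_to (fun _ => c) c.
Proof. by move=> e e0; exists 0%N => n _; rewrite subrr hnorm0. Qed.

Lemma eq_hcvg u v l : (forall n, u n = v n) -> hcvg_to u l -> hcvg_to v l.
Proof. by move=> uv ul e /ul[N uN]; exists N => n /uN; rewrite uv. Qed.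

Lemma hcvg_shift u l (f : nat -> nat) : (forall n, (n <= f n)%N) ->
  hcvg_to u l -> hcvg_to (u \o f) l.
Proof. by move=> f_ge ul e /ul[N uN]; exists N => n Nn; apply/uN/(leq_trans Nn). Qed.

Lemma hcvgD u v a b : hcvg_to u a -> hcvg_to v b ->
  hcvg_to (fun n => u n + v n) (a + b).
Proof.
move=> ua vb e e0.
have e2 : 0 < e / 2 by rewrite divr_gt0.
have [N1 uN1] := ua _ e2; have [N2 vN2] := vb _ e2.
exists (maxn N1 N2) => n; rewrite geq_max => /andP[/uN1 un /vN2 vn].
have := hnormD (u n - a) (v n - b); rewrite addrACA -opprD; lra.
Qed.

Lemma hcvg_lipschitz (T : H -> H) c u l :
  (forall x y, hn (T x - T y) <= c * hn (x - y)) ->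
  hcvg_to u l -> hcvg_to (T \o u) (T l).
Proof.
move=> T_lip ul e e0.
have c1 : 0 < `|c| + 1 by rewrite ltr_pwDr.
have [N uN] := ul _ (divr_gt0 e0 c1); exists N => n /uN un /=.
rewrite ltr_pdivlMr // in un.
apply: le_lt_trans (T_lip _ _) _; apply: le_lt_trans un.
have := hnorm_ge0 (u n - l); have := ler_norm c; nra.
Qed.

Lemma hcvgZ k u l : hcvg_to u l -> hcvg_to (fun n => k *: u n) (k *: l).
Proof.
apply: (hcvg_lipschitz (c := Num.sqrt (Re k ^+ 2 + Im k ^+ 2))) => x y.
by rewrite -scalerBr hnormZ.
Qed.

Lemma hcvgB u v a b : hcvg_to u a -> hcvg_to v b ->
  hcvg_to (fun n => u n - v n) (a - b).
Proof.
move=> ua /(hcvgZ (-1)) vb; have := hcvgD ua vb; rewrite scaleN1r.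
by apply: eq_hcvg => n; rewrite scaleN1r.
Qed.

Lemma hcvg_le u l c : hcvg_to u l -> (forall n, hn (u n) <= c) -> hn l <= c.
Proof.
move=> ul u_le; apply/ler_addgt0Pr => e /ul[N /(_ N (leqnn N)) uN].
have := hnormD (u N) (l - u N); rewrite addrC subrK hdistC.
have := u_le N; lra.
Qed.

Lemma hcvg_ip u v a b x y : hcvg_to u a -> hcvg_to v b ->
  (forall n, ip (u n) y = ip x (v n)) -> ip a y = ip x b.
Proof.
move=> ua vb uv; set z := ip a y - ip x b.
have z_at n : z = ip (a - u n) y - ip x (b - v n) by rewrite ipBl ipBr uv /z; ring.
suff small (f : R[i] -> R) : (forall p q, `|f (ip p q)| <= hn p * hn q) ->
    (forall s t, f (s - t) = f s - f t) -> f z = 0.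
  apply/eqP; rewrite -subr_eq0 -/z eq_complex /=.
  by rewrite (small _ norm_Re_ip_le ReB) (small _ norm_Im_ip_le ImB) eqxx.
move=> f_le fB; apply/eqP; rewrite -normr_eq0 eq_le normr_ge0 andbT.
apply/ler_addgt0Pr => e e0; rewrite add0r.
set c1 := hn x + hn y + 1.
have c1_gt0 : 0 < c1 by rewrite ltr_pwDr // addr_ge0 ?hnorm_ge0.
have [N1 uN1] := ua _ (divr_gt0 e0 c1_gt0); have [N2 vN2] := vb _ (divr_gt0 e0 c1_gt0).
set n := maxn N1 N2.
have := uN1 n (leq_maxl _ _); have := vN2 n (leq_maxr _ _).
rewrite hdistC (hdistC (u n)) !ltr_pdivlMr //.
rewrite (z_at n) fB; have := ler_normB (f (ip (a - u n) y)) (f (ip x (b - v n))).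
have := f_le (a - u n) y; have := f_le x (b - v n).
have := hnorm_ge0 x; have := hnorm_ge0 y.
have := hnorm_ge0 (a - u n); have := hnorm_ge0 (b - v n); rewrite /c1; nra.
Qed.

Lemma nondecreasing_bounded_cauchy (w : nat -> R) b :
  (forall n, w n <= w n.+1) -> (forall n, w n <= b) ->
  forall e, 0 < e -> exists N, forall m n, (N <= m)%N -> (N <= n)%N -> `|w m - w n| < e.
Proof.
move=> w_incr w_le e e0.
have w_mono m n : (m <= n)%N -> w m <= w n.
  by move=> /subnK <-; elim: (n - m)%N => //= k IH; apply: le_trans IH (w_incr _).
suff [N wN] : exists N, forall n, (N <= n)%N -> w n - w N < e / 2.
  exists N => m n /[dup] Nm /wN + /[dup] Nn /wN.
  have := w_mono _ _ Nm; have := w_mono _ _ Nn; rewrite ltr_norml; move=> *.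
  apply/andP; split; lra.
(* Otherwise [w] climbs by [e / 2] infinitely often and exceeds [b]. *)
apply: NNPP => no_N.
have climb N : exists n, w N + e / 2 <= w n.
  apply: NNPP => h; apply: no_N; exists N => n _; rewrite ltrBlDl ltNge.
  by apply/negP => le; apply: h; exists n.
have high k : exists n, w 0%N + k%:R * (e / 2) <= w n.
  elim: k => [|k [n wn]]; first by exists 0%N; rewrite mul0r addr0.
  have [m wm] := climb n; exists m; rewrite mulrSr mulrDl mul1r addrA; lra.
have e2 : 0 < e / 2 by rewrite divr_gt0.
have b0 : 0 <= (b - w 0%N) / (e / 2) by rewrite divr_ge0 ?subr_ge0 ?w_le ?ltW.
have [n wn] := high (Num.bound ((b - w 0%N) / (e / 2))).
have := archi_boundP b0; rewrite ltr_pdivrMr // => bnd.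
have := w_le n; lra.
Qed.

Definition linear_op (T : H -> H) : Prop :=
  forall a x y, T (a *: x + y) = a *: T x + T y.

Definition bounded_by (T : H -> H) (c : R) : Prop := forall x, hn (T x) <= c * hn x.

Definition selfadjoint (T : H -> H) : Prop := is_adjoint ip T T.

Definition commute_op (C T : H -> H) : Prop := forall x, C (T x) = T (C x).

Section LinearOp.
Variable T : H -> H.
Hypothesis linT : linear_op T.

Lemma linopD x y : T (x + y) = T x + T y.
Proof. by rewrite -[x]scale1r linT !scale1r. Qed.

Lemma linop0 : T 0 = 0.
Proof. by have := linopD 0 0; rewrite addr0 -{1}[T 0]addr0 => /addrI <-. Qed.

Lemma linopZ a x : T (a *: x) = a *: T x.
Proof. by rewrite -[a *: x]addr0 linT linop0 addr0. Qed.

Lemma linopN x : T (- x) = - T x.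
Proof. by rewrite -scaleN1r linopZ scaleN1r. Qed.

Lemma linopB x y : T (x - y) = T x - T y.
Proof. by rewrite linopD linopN. Qed.

Lemma bounded_lipschitz c : bounded_by T c ->
  forall x y, hn (T x - T y) <= c * hn (x - y).
Proof. by move=> Tc x y; rewrite -linopB. Qed.

End LinearOp.

Lemma linear_op_id : linear_op id.
Proof. by []. Qed.

Lemma linear_op0 : linear_op (fun _ => 0).
Proof. by move=> a x y; rewrite scaler0 addr0. Qed.

Lemma linear_op_comp A B : linear_op A -> linear_op B -> linear_op (A \o B).
Proof. by move=> linA linB a x y /=; rewrite linB linA. Qed.

Lemma linear_opD A B : linear_op A -> linear_op B -> linear_op (fun x => A x + B x).
Proof. by move=> linA linB a x y; rewrite linA linB scalerDr addrACA. Qed.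

Lemma linear_opB A B : linear_op A -> linear_op B -> linear_op (fun x => A x - B x).
Proof. by move=> linA linB a x y; rewrite linA linB scalerBr opprD addrACA. Qed.

Lemma linear_opZ k A : linear_op A -> linear_op (fun x => k *: A x).
Proof. by move=> linA a x y; rewrite linA scalerDr !scalerA mulrC. Qed.

Lemma linear_op_iter Z k : linear_op Z -> linear_op (iter k Z).
Proof. by move=> linZ; elim: k => [//|k IH] a x y /=; rewrite IH linZ. Qed.

Lemma bounded_by0 : bounded_by (fun _ => 0) 0.
Proof. by move=> x; rewrite hnorm0 mul0r. Qed.

Lemma bounded_by_id : bounded_by id 1.
Proof. by move=> x; rewrite mul1r. Qed.

Lemma bounded_by_comp A B a b : 0 <= a -> bounded_by A a -> bounded_by B b ->
  bounded_by (A \o B) (a * b).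
Proof. by move=> a0 Aa Bb x; apply: le_trans (Aa _) _; rewrite -mulrA ler_wpM2l. Qed.

Lemma bounded_byD A B a b : bounded_by A a -> bounded_by B b ->
  bounded_by (fun x => A x + B x) (a + b).
Proof. by move=> Aa Bb x; apply: le_trans (hnormD _ _) _; rewrite mulrDl lerD. Qed.

Lemma bounded_byB A B a b : bounded_by A a -> bounded_by B b ->
  bounded_by (fun x => A x - B x) (a + b).
Proof. by move=> Aa Bb x; apply: le_trans (hnormD _ _) _; rewrite hnormN mulrDl lerD. Qed.

Lemma bounded_byZr (r : R) A a : bounded_by A a ->
  bounded_by (fun x => r%:C *: A x) (`|r| * a).
Proof. by move=> Aa x; rewrite hnormZr -mulrA ler_wpM2l. Qed.

Lemma bounded_byZi A a : bounded_by A a -> bounded_by (fun x => 'i *: A x) a.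
Proof. by move=> Aa x; rewrite hnormZi. Qed.

Lemma bounded_by_le T a b : a <= b -> bounded_by T a -> bounded_by T b.
Proof. by move=> ab Ta x; apply: le_trans (Ta x) _; rewrite ler_wpM2r ?hnorm_ge0. Qed.

Lemma contraction_iter Z k : bounded_by Z 1 -> bounded_by (iter k Z) 1.
Proof.
move=> Z1; elim: k => [|k IH] x /=; first by rewrite mul1r.
by apply: le_trans (Z1 _) _; rewrite mul1r.
Qed.

Lemma contraction_sqr T x : bounded_by T 1 -> hn (T x) ^+ 2 <= hn x ^+ 2.
Proof. by move=> T1; rewrite ler_sqr ?nnegrE ?hnorm_ge0 // -[hn x]mul1r. Qed.

Lemma bounded_by_ge0 T c : bounded_by T c -> exists2 c', 0 <= c' & bounded_by T c'.
Proof.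
move=> Tc; exists `|c| => // x; apply: le_trans (Tc x) _.
by rewrite ler_wpM2r ?hnorm_ge0 ?ler_norm.
Qed.

Lemma adjoint_unique T A B : is_adjoint ip T A -> is_adjoint ip T B -> A = B.
Proof.
by move=> TA TB; apply: functional_extensionality => y; apply: ipr_inj => x; rewrite -TA TB.
Qed.

Lemma adjoint_sym T A : is_adjoint ip T A -> is_adjoint ip A T.
Proof. by move=> TA x y; rewrite ip_sym -TA -ip_sym. Qed.

Lemma adjoint_comp A A' B B' : is_adjoint ip A A' -> is_adjoint ip B B' ->
  is_adjoint ip (A \o B) (B' \o A').
Proof. by move=> AA' BB' x y /=; rewrite AA' BB'. Qed.

Lemma adjoint_linear T A : is_adjoint ip T A -> linear_op A.
Proof. by move=> TA a x y; apply: ipr_inj => z; rewrite -TA ipDr ipZr ipDr ipZr -!TA. Qed.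

Lemma selfadjoint_linear T : selfadjoint T -> linear_op T.
Proof. exact: adjoint_linear. Qed.

Lemma selfadjointD A B : selfadjoint A -> selfadjoint B -> selfadjoint (fun x => A x + B x).
Proof. by move=> sA sB x y; rewrite ipDl ipDr sA sB. Qed.

Lemma selfadjointB A B : selfadjoint A -> selfadjoint B -> selfadjoint (fun x => A x - B x).
Proof. by move=> sA sB x y; rewrite ipBl ipBr sA sB. Qed.

Lemma selfadjointZr (r : R) A : selfadjoint A -> selfadjoint (fun x => r%:C *: A x).
Proof. by move=> sA x y; rewrite ipZl ipZr conjc_real sA. Qed.

Lemma selfadjoint_iter Z k : selfadjoint Z -> selfadjoint (iter k Z).
Proof. by move=> sZ; elim: k => [//|k IH] x y /=; rewrite sZ IH -iterSr. Qed.

Lemma selfadjoint_comp_eq0 F X : selfadjoint F -> selfadjoint X ->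
  (forall x, X (F x) = 0) -> forall x, F (X x) = 0.
Proof. by move=> sF sX XF x; apply: ipr_inj => z; rewrite ip0r -sF -sX XF ip0l. Qed.

Lemma isometry_contraction T T' : is_adjoint ip T T' -> (forall x, T' (T x) = x) ->
  bounded_by T 1.
Proof. by move=> TT' T'T x; rewrite mul1r /hnorm TT' T'T. Qed.

Lemma commute_op_iter Z C k : commute_op C Z -> commute_op C (iter k Z).
Proof. by move=> CZ; elim: k => [//|k IH] x /=; rewrite CZ IH. Qed.

Section StrongLimit.
Variables (Ts : nat -> H -> H) (T : H -> H).
Hypothesis Ts_cvg : forall x, hcvg_to (fun k => Ts k x) (T x).

Lemma strong_lim_linear : (forall k, linear_op (Ts k)) -> linear_op T.
Proof.
move=> linTs a x y; apply: (hcvg_unique (Ts_cvg _)).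
by apply: eq_hcvg (hcvgD (hcvgZ a (Ts_cvg x)) (Ts_cvg y)) => n; rewrite linTs.
Qed.

Lemma strong_lim_bounded c : (forall k, bounded_by (Ts k) c) -> bounded_by T c.
Proof. by move=> Tsc x; apply: hcvg_le (Ts_cvg x) _ => n; apply: Tsc. Qed.

Lemma strong_lim_selfadjoint : (forall k, selfadjoint (Ts k)) -> selfadjoint T.
Proof. by move=> sTs x y; apply: hcvg_ip (Ts_cvg x) (Ts_cvg y) _ => n; apply: sTs. Qed.

Lemma strong_lim_commute C c : linear_op C -> bounded_by C c ->
  (forall k, commute_op C (Ts k)) -> commute_op C T.
Proof.
move=> linC Cc CTs x; apply: (hcvg_unique _ (Ts_cvg (C x))).
apply: eq_hcvg (hcvg_lipschitz (bounded_lipschitz linC Cc) (Ts_cvg x)) => n.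
exact: CTs.
Qed.

End StrongLimit.

Lemma eq_op_at_limit G1 G2 c1 c2 u l :
  linear_op G1 -> linear_op G2 -> bounded_by G1 c1 -> bounded_by G2 c2 ->
  hcvg_to u l -> (forall n, G1 (u n) = G2 (u n)) -> G1 l = G2 l.
Proof.
move=> lin1 lin2 G1c G2c ul G12.
apply: (hcvg_unique (hcvg_lipschitz (bounded_lipschitz lin1 G1c) ul)).
by apply: eq_hcvg (hcvg_lipschitz (bounded_lipschitz lin2 G2c) ul) => n /=; rewrite G12.
Qed.

(** * Kernel and support projections *)

Section OneSubSquare.
Variable B : H -> H.
Hypotheses (sB : selfadjoint B) (B1 : bounded_by B 1).

Lemma hnorm_one_sub_sqr_le x : hn (x - B (B x)) ^+ 2 <= hn x ^+ 2 - hn (B x) ^+ 2.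
Proof.
rewrite hnormB_sqr -sB hnorm_sqr.
by have := contraction_sqr (B x) B1; rewrite -!hnorm_sqr; lra.
Qed.

Lemma one_sub_sqr_linear : linear_op (fun x => x - B (B x)).
Proof.
have linB := selfadjoint_linear sB.
exact: linear_opB linear_op_id (linear_op_comp linB linB).
Qed.

Lemma one_sub_sqr_selfadjoint : selfadjoint (fun x => x - B (B x)).
Proof. by move=> x y; rewrite ipBl ipBr !sB. Qed.

Lemma one_sub_sqr_contraction : bounded_by (fun x => x - B (B x)) 1.
Proof.
move=> x; rewrite mul1r -ler_sqr ?nnegrE ?hnorm_ge0 //.
by have := hnorm_one_sub_sqr_le x; have := sqr_ge0 (hn (B x)); lra.
Qed.

End OneSubSquare.

(* For a self-adjoint contraction [B], the powers of [1 - B ^ 2] decrease strongly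
   to the projection onto [ker B]. *)
Definition ker_proj (B : H -> H) (x : H) : H :=
  hlim (fun n => iter (n + n) (fun y => y - B (B y)) x).

Section KernelProjection.
Variable B : H -> H.
Hypotheses (sB : selfadjoint B) (B1 : bounded_by B 1).

Local Notation Z := (fun y => y - B (B y)).
Local Notation linB := (selfadjoint_linear sB).
Local Notation linZ := (one_sub_sqr_linear sB).
Local Notation sZ := (one_sub_sqr_selfadjoint sB).
Local Notation Z1 := (one_sub_sqr_contraction sB B1).
Local Notation Z2 := (fun n => iter (n + n) Z).

Let BZ : commute_op B Z.
Proof. by move=> x; rewrite (linopB linB). Qed.

(* The squared norms [nsq k] of the iterates decrease, so they converge; and
   [|Z^(2n) x - Z^(2m) x|^2 = nsq (2n) + nsq (2m) - 2 nsq (n + m)] by self-adjointness. *)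
Let nsq x k := hn (iter k Z x) ^+ 2.

Let nsq_cauchy x e : 0 < e -> exists N, forall m n, (N <= m)%N -> (N <= n)%N ->
  `|nsq x m - nsq x n| < e.
Proof.
move=> e0; have nsq_decr n : - nsq x n <= - nsq x n.+1.
  by rewrite lerN2; apply: contraction_sqr (iter n Z x) Z1.
have nsq_le0 n : - nsq x n <= 0 by rewrite oppr_le0 sqr_ge0.
have [N cN] := nondecreasing_bounded_cauchy nsq_decr nsq_le0 e0.
by exists N => m n Nm Nn; have := cN m n Nm Nn; rewrite -opprD normrN.
Qed.

Let iter_dist_sqr x n m :
  hn (iter (n + n) Z x - iter (m + m) Z x) ^+ 2 = nsq x (n + n) + nsq x (m + m) - 2 * nsq x (n + m).
Proof.
have ip_iter a b : ip (iter a Z x) (iter b Z x) = ip x (iter (a + b)%N Z x).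
  by rewrite (selfadjoint_iter a sZ) iterD.
by rewrite hnormB_sqr /nsq !hnorm_sqr !ip_iter (addnACA n n m m).
Qed.

Lemma ker_proj_cvg x : hcvg_to (fun n => iter (n + n) Z x) (ker_proj B x).
Proof.
apply: hcauchy_cvg => e e0.
have [N cN] := nsq_cauchy x (divr_gt0 (exprn_gt0 2 e0) (ltr0n _ 4)).
have le_add a b : (N <= a)%N -> (N <= a + b)%N by move=> /leq_trans; apply; rewrite leq_addr.
exists N => m n Nm Nn /=; apply: hnorm_lt_sqr => //; rewrite iter_dist_sqr.
have := cN (m + m)%N (m + n)%N (le_add _ _ Nm) (le_add _ _ Nm).
have := cN (n + n)%N (m + n)%N (le_add _ _ Nn) (le_add _ _ Nm).
rewrite !ltr_norml; lra.
Qed.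

Lemma ker_proj_linear : linear_op (ker_proj B).
Proof.
exact: (strong_lim_linear (Ts := Z2) ker_proj_cvg (fun k => linear_op_iter _ linZ)).
Qed.

Lemma ker_proj_selfadjoint : selfadjoint (ker_proj B).
Proof.
exact: (strong_lim_selfadjoint (Ts := Z2) ker_proj_cvg (fun k => selfadjoint_iter _ sZ)).
Qed.

Lemma ker_proj_contraction : bounded_by (ker_proj B) 1.
Proof.
exact: (strong_lim_bounded (Ts := Z2) ker_proj_cvg (fun k => contraction_iter _ Z1)).
Qed.

Lemma ker_proj_ker x : B (ker_proj B x) = 0.
Proof.
have B_iter_to0 : hcvg_to (fun n => B (iter (n + n) Z x)) 0.
  move=> e e0; have [N cN] := nsq_cauchy x (exprn_gt0 2 e0).
  exists N => n Nn; rewrite subr0; apply: hnorm_lt_sqr => //.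
  have Nn2 : (N <= n + n)%N by apply: leq_trans Nn (leq_addr _ _).
  have := cN _ _ Nn2 (leq_trans Nn2 (leqnSn _)); rewrite ltr_norml /nsq /=.
  by have := hnorm_one_sub_sqr_le sB B1 (iter (n + n) Z x); lra.
exact: hcvg_unique (hcvg_lipschitz (bounded_lipschitz linB B1) (ker_proj_cvg x)) B_iter_to0.
Qed.

Lemma ker_proj_id x : B x = 0 -> ker_proj B x = x.
Proof.
move=> Bx0; have Zx k : iter k Z x = x by elim: k => //= k ->; rewrite Bx0 (linop0 linB) subr0.
by apply: hlimE; apply: eq_hcvg (hcvg_cst x) => n; rewrite Zx.
Qed.

Lemma ker_proj_range x : exists y : nat -> H, hcvg_to (B \o y) (x - ker_proj B x).
Proof.
have telescope k : x - iter k Z x = B (\sum_(j < k) iter j Z (B x)).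
  elim: k => [|k IH]; first by rewrite big_ord0 subrr (linop0 linB).
  rewrite big_ord_recr /= (linopD linB) -IH -(commute_op_iter k BZ).
  by rewrite opprB (addrC (B _)) addrA.
exists (fun n => \sum_(j < n + n) iter j Z (B x)).
by apply: eq_hcvg (hcvgB (hcvg_cst x) (ker_proj_cvg x)) => n; rewrite telescope.
Qed.

Lemma ker_proj_commute C c : linear_op C -> bounded_by C c -> commute_op C B ->
  commute_op C (ker_proj B).
Proof.
move=> linC Cc CB; apply: (strong_lim_commute (Ts := fun k => iter (k + k) Z) ker_proj_cvg linC Cc).
by move=> k; apply: commute_op_iter => x; rewrite (linopB linC) !CB.
Qed.

End KernelProjection.

(* The projection onto the closure of the range of [T], when [c] bounds [T]. *)
Definition supp_proj (T : H -> H) (c : R) (x : H) : H :=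
  x - ker_proj (fun y => c^-1%:C *: T y) x.

Section SupportProjection.
Variables (T : H -> H) (c : R).
Hypotheses (sT : selfadjoint T) (Tc : bounded_by T c) (c_gt0 : 0 < c).

Local Notation B := (fun y => c^-1%:C *: T y).
Local Notation P := (supp_proj T c).
Local Notation linT := (selfadjoint_linear sT).

Let sB : selfadjoint B.
Proof. exact: selfadjointZr. Qed.

Let B1 : bounded_by B 1.
Proof. by have := bounded_byZr c^-1 Tc; rewrite gtr0_norm ?invr_gt0 // mulVf ?gt_eqF. Qed.

Let linF := ker_proj_linear sB B1.

Let scale_inv_eq0 (v : H) : c^-1%:C *: v = 0 -> v = 0.
Proof.
move=> /(congr1 (fun u : H => c%:C *: u)).
by rewrite scalerA -rmorphM mulfV ?gt_eqF // rmorph1 scale1r scaler0.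
Qed.

Let T_ker_proj x : T (ker_proj B x) = 0.
Proof. exact: scale_inv_eq0 (ker_proj_ker sB B1 x). Qed.

Lemma supp_proj_linear : linear_op P.
Proof. exact: linear_opB linear_op_id linF. Qed.

Lemma supp_proj_selfadjoint : selfadjoint P.
Proof. exact: selfadjointB (fun _ _ => erefl) (ker_proj_selfadjoint sB B1). Qed.

Lemma supp_proj_bounded : bounded_by P 2.
Proof. by have := bounded_byB bounded_by_id (ker_proj_contraction sB B1). Qed.

Lemma T_supp_proj x : T (P x) = T x.
Proof. by rewrite /supp_proj (linopB linT) T_ker_proj subr0. Qed.

Lemma supp_proj_range y : P (T y) = T y.
Proof.
suff FT : ker_proj B (T y) = 0 by rewrite /supp_proj FT subr0.
apply: scale_inv_eq0; rewrite -(linopZ linF).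
exact: selfadjoint_comp_eq0 (ker_proj_selfadjoint sB B1) sB (ker_proj_ker sB B1) y.
Qed.

Lemma supp_proj_ker v : T v = 0 -> P v = 0.
Proof. by move=> Tv0; rewrite /supp_proj (ker_proj_id sB) ?subrr // Tv0 scaler0. Qed.

Lemma supp_proj_id x : P (P x) = P x.
Proof.
have FP : ker_proj B (P x) = 0.
  rewrite /supp_proj (linopB linF) (ker_proj_id sB (x := ker_proj B x)) ?subrr //.
  by rewrite /= T_ker_proj scaler0.
by rewrite {1}/supp_proj FP subr0.
Qed.

Lemma supp_proj_ext G1 G2 c1 c2 : linear_op G1 -> linear_op G2 ->
  bounded_by G1 c1 -> bounded_by G2 c2 ->
  (forall y, G1 (T y) = G2 (T y)) -> forall x, G1 (P x) = G2 (P x).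
Proof.
move=> lin1 lin2 G1c G2c G12 x; have [y By] := ker_proj_range sB B1 x.
apply: (eq_op_at_limit lin1 lin2 G1c G2c By) => n /=.
by rewrite (linopZ lin1) (linopZ lin2) G12.
Qed.

Lemma supp_proj_commute C d : linear_op C -> bounded_by C d -> commute_op C T ->
  commute_op C P.
Proof.
move=> linC Cd CT; have CB : commute_op C B by move=> y; rewrite (linopZ linC) CT.
by move=> x; rewrite /supp_proj (linopB linC) (ker_proj_commute sB B1 linC Cd CB).
Qed.

End SupportProjection.

(** * Square roots *)

(* [sqrt_defect Y] is [1 - sqrt (1 - Y)]: its fixed-point equation
   [T = (Y + T ^ 2) / 2] says [(1 - T) ^ 2 = 1 - Y]. *)
Fixpoint sqrt_approx (Y : H -> H) (k : nat) : H -> H :=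
  if k is k'.+1 then fun x => (2^-1)%:C *: (Y x + sqrt_approx Y k' (sqrt_approx Y k' x))
  else fun _ => 0.

Definition sqrt_defect (Y : H -> H) (x : H) : H := hlim (fun k => sqrt_approx Y k x).

(* The same iteration with [Y] replaced by the scalar [1]: it majorizes the
   norms of the [T_k] and of their increments. *)
Fixpoint sqrt_majorant (k : nat) : R :=
  if k is k'.+1 then (1 + sqrt_majorant k' ^+ 2) / 2 else 0.

Local Notation w := sqrt_majorant.

Lemma sqrt_majorant_bound k : 0 <= w k <= 1.
Proof.
elim: k => [|k /andP[w0 w1]] /=; first by rewrite lexx ler01.
by rewrite divr_ge0 ?addr_ge0 ?sqr_ge0 //= ler_pdivrMr // mul1r; nra.
Qed.

Lemma sqrt_majorant_incr k : w k <= w k.+1.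
Proof. by rewrite /= ler_pdivlMr //; have := sqr_ge0 (1 - w k); nra. Qed.

Lemma sqrt_majorant_diff k : w k.+2 - w k.+1 = (w k.+1 - w k) * (w k.+1 + w k) / 2.
Proof. by rewrite [w k.+2]/= [w k.+1]/=; field. Qed.

Section SquareRoot.
Variable Y : H -> H.
Hypotheses (sY : selfadjoint Y) (Y1 : bounded_by Y 1).

Local Notation T := (sqrt_approx Y).
Local Notation linY := (selfadjoint_linear sY).

Let sqrt_approxS k x : T k.+1 x = (2^-1)%:C *: (Y x + T k (T k x)).
Proof. by []. Qed.

Let linT k : linear_op (T k).
Proof.
elim: k => [|k IH]; first exact: linear_op0.
exact: linear_opZ (linear_opD linY (linear_op_comp IH IH)).
Qed.

Let sT k : selfadjoint (T k).
Proof.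
elim: k => [|k IH] x y; first by rewrite ip0l ip0r.
by rewrite !sqrt_approxS ipZl ipZr conjc_real ipDl ipDr sY IH IH.
Qed.

Let Tw k : bounded_by (T k) (w k).
Proof.
elim: k => [|k IH] x; first by rewrite /= hnorm0 mul0r.
have /andP[w0 w1] := sqrt_majorant_bound k.
rewrite sqrt_approxS hnormZr ger0_norm ?invr_ge0 //.
have := hnormD (Y x) (T k (T k x)); have := Y1 x; rewrite mul1r.
have := ler_wpM2l w0 (IH x); have := IH (T k x); rewrite /=; nra.
Qed.

Let T1 k : bounded_by (T k) 1.
Proof.
move=> x; apply: le_trans (Tw k x) _; rewrite ler_wpM2r ?hnorm_ge0 //.
by have /andP[] := sqrt_majorant_bound k.
Qed.

Let sqrt_approx_step k x : hn (T k.+1 x - T k x) <= (w k.+1 - w k) * hn x.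
Proof.
elim: k x => [|k IH] x.
  rewrite /= subr0 addr0 hnormZr ger0_norm ?invr_ge0 // expr0n /= addr0 subr0 mul1r.
  by have := Y1 x; rewrite mul1r; lra.
have -> : T k.+2 x - T k.+1 x = (2^-1)%:C *: (T k.+1 (T k.+1 x) - T k (T k x)).
  rewrite [T k.+2 x]sqrt_approxS [X in _ - X = _]sqrt_approxS -scalerBr.
  by rewrite opprD addrACA subrr add0r.
have split : T k.+1 (T k.+1 x) - T k (T k x) =
    (T k.+1 (T k.+1 x) - T k (T k.+1 x)) + T k (T k.+1 x - T k x).
  by rewrite (linopB (linT k)) addrA subrK.
rewrite hnormZr ger0_norm ?invr_ge0 // split sqrt_majorant_diff.
have /andP[w0 _] := sqrt_majorant_bound k.
have d0 : 0 <= w k.+1 - w k by rewrite subr_ge0 sqrt_majorant_incr.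
have := hnormD (T k.+1 (T k.+1 x) - T k (T k.+1 x)) (T k (T k.+1 x - T k x)).
have := IH (T k.+1 x); have := ler_wpM2l d0 (Tw k.+1 x).
have := Tw k (T k.+1 x - T k x); have := ler_wpM2l w0 (IH x).
lra.
Qed.

Let sqrt_approx_dist n m x : (n <= m)%N -> hn (T m x - T n x) <= (w m - w n) * hn x.
Proof.
move=> /subnK <-; elim: (m - n)%N => [|k IH]; first by rewrite !subrr hnorm0 mul0r.
have := ler_hdistD (T (k.+1 + n) x) (T (k + n) x) (T n x).
by have := sqrt_approx_step (k + n) x; rewrite addSn; lra.
Qed.

Lemma sqrt_defect_cvg x : hcvg_to (fun k => T k x) (sqrt_defect Y x).
Proof.
apply: hcauchy_cvg => e e0.
have x1 : 0 < hn x + 1 by rewrite ltr_pwDr ?hnorm_ge0.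
have w_le1 n : w n <= 1 by have /andP[] := sqrt_majorant_bound n.
have [N wN] := nondecreasing_bounded_cauchy sqrt_majorant_incr w_le1 (divr_gt0 e0 x1).
exists N => m n Nm Nn /=; have := wN m n Nm Nn; rewrite ltr_pdivlMr //.
have := hnorm_ge0 x; have := ler_norm (w m - w n); have := ler_norm (w n - w m).
rewrite distrC; case: (leqP n m) => [nm|/ltnW mn].
  by have := sqrt_approx_dist x nm; nra.
by rewrite hdistC; have := sqrt_approx_dist x mn; nra.
Qed.

Lemma sqrt_defect_linear : linear_op (sqrt_defect Y).
Proof. exact: strong_lim_linear sqrt_defect_cvg linT. Qed.

Lemma sqrt_defect_selfadjoint : selfadjoint (sqrt_defect Y).
Proof. exact: strong_lim_selfadjoint sqrt_defect_cvg sT. Qed.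

Lemma sqrt_defect_contraction : bounded_by (sqrt_defect Y) 1.
Proof. exact: (strong_lim_bounded (Ts := T) sqrt_defect_cvg T1). Qed.

Lemma sqrt_defect_sqr x :
  (x - sqrt_defect Y x) - sqrt_defect Y (x - sqrt_defect Y x) = x - Y x.
Proof.
set S := sqrt_defect Y.
have TT_cvg : hcvg_to (fun k => T k (T k x)) (S (S x)).
  move=> e e0; have e2 : 0 < e / 2 by rewrite divr_gt0.
  have [N1 TN1] := sqrt_defect_cvg x e2; have [N2 TN2] := sqrt_defect_cvg (S x) e2.
  exists (maxn N1 N2) => n; rewrite geq_max => /andP[/TN1 Tn1 /TN2 Tn2].
  have := ler_hdistD (T n (T n x)) (T n (S x)) (S (S x)).
  by have := T1 n (T n x - S x); rewrite mul1r (linopB (linT n)); lra.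
have lim1 : hcvg_to (fun k => T k.+1 x) (S x) by apply: hcvg_shift (sqrt_defect_cvg x).
have lim2 : hcvg_to (fun k => T k.+1 x) ((2^-1)%:C *: (Y x + S (S x))).
  exact: hcvgZ (hcvgD (hcvg_cst (Y x)) TT_cvg).
have fixpoint : S x + S x = Y x + S (S x).
  rewrite {1 2}(hcvg_unique lim1 lim2) -scalerDl -rmorphD /=.
  have -> : (2^-1 + 2^-1 : R) = 1 by field.
  by rewrite rmorph1 scale1r.
by rewrite /S (linopB sqrt_defect_linear) -/S -addrA -opprD addrA fixpoint addrK.
Qed.

Lemma sqrt_defect_commute C c : linear_op C -> bounded_by C c -> commute_op C Y ->
  commute_op C (sqrt_defect Y).
Proof.
move=> linC Cc CY; apply: (strong_lim_commute sqrt_defect_cvg linC Cc).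
elim=> [|k IH] x; first exact: (linop0 linC).
by rewrite !sqrt_approxS (linopZ linC) (linopD linC) CY !IH.
Qed.

End SquareRoot.

(* [op_abs A] is [|A| = sqrt (A ^ 2)]. *)
Definition op_abs (A : H -> H) (x : H) : H := x - sqrt_defect (fun y => y - A (A y)) x.

Section AbsoluteValue.
Variable A : H -> H.
Hypotheses (sA : selfadjoint A) (A1 : bounded_by A 1).

Local Notation Y := (fun y => y - A (A y)).
Let sY := one_sub_sqr_selfadjoint sA.
Let Y1 := one_sub_sqr_contraction sA A1.

Lemma op_abs_linear : linear_op (op_abs A).
Proof. exact: linear_opB linear_op_id (sqrt_defect_linear sY Y1). Qed.

Lemma op_abs_selfadjoint : selfadjoint (op_abs A).
Proof. exact: selfadjointB (fun _ _ => erefl) (sqrt_defect_selfadjoint sY Y1). Qed.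

Lemma op_abs_bounded : bounded_by (op_abs A) 2.
Proof. exact: bounded_byB bounded_by_id (sqrt_defect_contraction sY Y1). Qed.

Lemma op_abs_sqr x : op_abs A (op_abs A x) = A (A x).
Proof. by rewrite /op_abs (sqrt_defect_sqr sY Y1) subKr. Qed.

Lemma op_abs_commute C c : linear_op C -> bounded_by C c ->
  commute_op C (A \o A) -> commute_op C (op_abs A).
Proof.
move=> linC Cc CAA; have CY : commute_op C Y by move=> y; rewrite (linopB linC) CAA.
by move=> x; rewrite /op_abs (linopB linC) (sqrt_defect_commute sY Y1 linC Cc CY).
Qed.

End AbsoluteValue.

(** * Sign decomposition of a self-adjoint contraction *)

Definition pos_part (A : H -> H) (x : H) : H := op_abs A x + A x.
Definition neg_part (A : H -> H) (x : H) : H := op_abs A x - A x.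

(* [pos_part A] and [neg_part A] are twice the positive and negative parts of [A];
   [3] bounds their norms. *)
Definition pos_proj (A : H -> H) : H -> H := supp_proj (pos_part A) 3.
Definition neg_proj (A : H -> H) : H -> H := supp_proj (neg_part A) 3.
Definition null_proj (A : H -> H) (x : H) : H := x - pos_proj A x - neg_proj A x.

Section SignDecomposition.
Variable A : H -> H.
Hypotheses (sA : selfadjoint A) (A1 : bounded_by A 1).

Local Notation N := (op_abs A).
Local Notation Np := (pos_part A).
Local Notation Nm := (neg_part A).
Local Notation P := (pos_proj A).
Local Notation Q := (neg_proj A).
Local Notation F := (null_proj A).
Local Notation linA := (selfadjoint_linear sA).
Local Notation linN := (op_abs_linear sA A1).

Let AN : commute_op A N.
Proof. by apply: (op_abs_commute sA A1 linA A1). Qed.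

Let linNp : linear_op Np := linear_opD linN linA.
Let linNm : linear_op Nm := linear_opB linN linA.
Let sNp : selfadjoint Np := selfadjointD (op_abs_selfadjoint sA A1) sA.
Let sNm : selfadjoint Nm := selfadjointB (op_abs_selfadjoint sA A1) sA.

Let Np3 : bounded_by Np 3.
Proof. by apply: bounded_by_le (bounded_byD (op_abs_bounded sA A1) A1); lra. Qed.

Let Nm3 : bounded_by Nm 3.
Proof. by apply: bounded_by_le (bounded_byB (op_abs_bounded sA A1) A1); lra. Qed.

Let three_gt0 : 0 < 3 :> R. Proof. exact: ltr0n. Qed.

Let Np_Nm x : Np (Nm x) = 0.
Proof.
rewrite /pos_part /neg_part (linopB linN) (linopB linA) (op_abs_sqr sA A1) AN.
by rewrite addrA subrK subrr.
Qed.

Let Nm_Np x : Nm (Np x) = 0.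
Proof.
rewrite /pos_part /neg_part (linopD linN) (linopD linA) (op_abs_sqr sA A1) AN.
by rewrite addrKA subrr.
Qed.

Lemma pos_proj_linear : linear_op P. Proof. exact: supp_proj_linear sNp Np3 three_gt0. Qed.
Lemma neg_proj_linear : linear_op Q. Proof. exact: supp_proj_linear sNm Nm3 three_gt0. Qed.

Lemma pos_proj_bounded : bounded_by P 2. Proof. exact: supp_proj_bounded sNp Np3 three_gt0. Qed.
Lemma neg_proj_bounded : bounded_by Q 2. Proof. exact: supp_proj_bounded sNm Nm3 three_gt0. Qed.

Lemma pos_proj_selfadjoint : selfadjoint P.
Proof. exact: supp_proj_selfadjoint sNp Np3 three_gt0. Qed.

Lemma neg_proj_selfadjoint : selfadjoint Q.
Proof. exact: supp_proj_selfadjoint sNm Nm3 three_gt0. Qed.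

Lemma null_proj_linear : linear_op F.
Proof. exact: linear_opB (linear_opB linear_op_id pos_proj_linear) neg_proj_linear. Qed.

Lemma null_proj_bounded : bounded_by F 5.
Proof.
apply: bounded_by_le (bounded_byB (bounded_byB bounded_by_id pos_proj_bounded) neg_proj_bounded).
by lra.
Qed.

Lemma null_proj_selfadjoint : selfadjoint F.
Proof.
exact: selfadjointB (selfadjointB (fun _ _ => erefl) pos_proj_selfadjoint) neg_proj_selfadjoint.
Qed.

Lemma pos_proj_id x : P (P x) = P x. Proof. exact: supp_proj_id sNp Np3 three_gt0 x. Qed.
Lemma neg_proj_id x : Q (Q x) = Q x. Proof. exact: supp_proj_id sNm Nm3 three_gt0 x. Qed.

Lemma pos_proj_pos_part y : P (Np y) = Np y.
Proof. exact: supp_proj_range sNp Np3 three_gt0 y. Qed.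

Lemma neg_proj_neg_part y : Q (Nm y) = Nm y.
Proof. exact: supp_proj_range sNm Nm3 three_gt0 y. Qed.

Lemma neg_proj_pos_part y : Q (Np y) = 0.
Proof. exact (supp_proj_ker 3 sNm (Nm_Np y)). Qed.

Lemma pos_proj_neg_part y : P (Nm y) = 0.
Proof. exact (supp_proj_ker 3 sNp (Np_Nm y)). Qed.

Lemma pos_proj_ext G1 G2 c1 c2 : linear_op G1 -> linear_op G2 ->
  bounded_by G1 c1 -> bounded_by G2 c2 ->
  (forall y, G1 (Np y) = G2 (Np y)) -> forall x, G1 (P x) = G2 (P x).
Proof. exact (supp_proj_ext sNp Np3 three_gt0 (G1 := G1) (G2 := G2) (c1 := c1) (c2 := c2)). Qed.

Lemma neg_proj_ext G1 G2 c1 c2 : linear_op G1 -> linear_op G2 ->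
  bounded_by G1 c1 -> bounded_by G2 c2 ->
  (forall y, G1 (Nm y) = G2 (Nm y)) -> forall x, G1 (Q x) = G2 (Q x).
Proof. exact (supp_proj_ext sNm Nm3 three_gt0 (G1 := G1) (G2 := G2) (c1 := c1) (c2 := c2)). Qed.

Lemma pos_neg_proj x : P (Q x) = 0.
Proof.
exact: neg_proj_ext pos_proj_linear linear_op0 pos_proj_bounded bounded_by0 pos_proj_neg_part x.
Qed.

Lemma neg_pos_proj x : Q (P x) = 0.
Proof.
exact: pos_proj_ext neg_proj_linear linear_op0 neg_proj_bounded bounded_by0 neg_proj_pos_part x.
Qed.

Lemma pos_null_proj x : P (F x) = 0.
Proof.
rewrite (linopB pos_proj_linear) (linopB pos_proj_linear).
by rewrite pos_proj_id pos_neg_proj subrr subr0.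
Qed.

Lemma neg_null_proj x : Q (F x) = 0.
Proof.
rewrite (linopB neg_proj_linear) (linopB neg_proj_linear).
by rewrite neg_proj_id neg_pos_proj subr0 subrr.
Qed.

Lemma null_proj_ker x : A (F x) = 0.
Proof.
have Np_F : Np (F x) = 0.
  rewrite (linopB linNp) (linopB linNp) (T_supp_proj sNp Np3 three_gt0) subrr sub0r.
  by rewrite (neg_proj_ext linNp linear_op0 Np3 bounded_by0 Np_Nm) oppr0.
have Nm_F : Nm (F x) = 0.
  rewrite (linopB linNm) (linopB linNm) (T_supp_proj sNm Nm3 three_gt0).
  by rewrite (pos_proj_ext linNm linear_op0 Nm3 bounded_by0 Nm_Np) subr0 subrr.
apply: double_inj; rewrite addr0; have -> : A (F x) + A (F x) = Np (F x) - Nm (F x).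
  by rewrite /pos_part /neg_part [in RHS]opprB [in RHS]addrC subrKA.
by rewrite Np_F Nm_F subrr.
Qed.

Lemma null_proj_id v : A v = 0 -> F v = v.
Proof.
move=> Av0; have Nv0 : N v = 0.
  apply: ip_eq0; rewrite (op_abs_selfadjoint sA A1) (op_abs_sqr sA A1) Av0.
  by rewrite (linop0 linA) ip0r.
have Npv0 : Np v = 0 by rewrite /pos_part Nv0 Av0 addr0.
have Nmv0 : Nm v = 0 by rewrite /neg_part Nv0 Av0 subr0.
have Pv0 : P v = 0 := supp_proj_ker 3 sNp Npv0.
have Qv0 : Q v = 0 := supp_proj_ker 3 sNm Nmv0.
by rewrite /null_proj Pv0 Qv0 !subr0.
Qed.

Lemma sign_decomposition_ext G1 G2 c1 c2 : linear_op G1 -> linear_op G2 ->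
  bounded_by G1 c1 -> bounded_by G2 c2 ->
  (forall y, G1 (N y) = G2 (N y)) -> (forall y, G1 (A y) = G2 (A y)) ->
  (forall v, A v = 0 -> G1 v = G2 v) -> forall x, G1 x = G2 x.
Proof.
move=> lin1 lin2 G1c G2c GN GA Gker x.
have GNp y : G1 (Np y) = G2 (Np y) by rewrite /pos_part (linopD lin1) (linopD lin2) GN GA.
have GNm y : G1 (Nm y) = G2 (Nm y) by rewrite /neg_part (linopB lin1) (linopB lin2) GN GA.
have -> : x = P x + Q x + F x.
  by rewrite /null_proj; move: (P x) (Q x) => p q; rewrite -(addrA x) -opprD subrKC.
rewrite (linopD lin1) (linopD lin1) (linopD lin2) (linopD lin2).
rewrite (pos_proj_ext lin1 lin2 G1c G2c GNp) (neg_proj_ext lin1 lin2 G1c G2c GNm).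
by rewrite (Gker _ (null_proj_ker x)).
Qed.

Lemma sign_decomposition_commute C c : linear_op C -> bounded_by C c -> commute_op C A ->
  [/\ commute_op C P, commute_op C Q & commute_op C F].
Proof.
move=> linC Cc CA.
have CN : commute_op C N by apply: (op_abs_commute sA A1 linC Cc) => x; rewrite /= !CA.
have CP : commute_op C P.
  by apply: (supp_proj_commute sNp Np3 three_gt0 linC Cc) => x; rewrite (linopD linC) CN CA.
have CQ : commute_op C Q.
  by apply: (supp_proj_commute sNm Nm3 three_gt0 linC Cc) => x; rewrite (linopB linC) CN CA.
by split=> // x; rewrite /null_proj (linopB linC) (linopB linC) CP CQ.
Qed.

End SignDecomposition.

(** * The symmetry *)

Definition real_part (W Wst : H -> H) (x : H) : H := (2^-1)%:C *: (W x + Wst x).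

(* The sign of [real_part W Wst], completed by [i W] on its kernel, where the
   unitary [W] is skew-adjoint, so that [i W] is a symmetry there. *)
Definition sign_symmetry (W Wst : H -> H) (x : H) : H :=
  pos_proj (real_part W Wst) x - neg_proj (real_part W Wst) x
  + 'i *: W (null_proj (real_part W Wst) x).

Section SignSymmetry.
Variables W Wst : H -> H.
Hypotheses (WWst : is_adjoint ip W Wst) (WstW1 : forall x, Wst (W x) = x)
  (WWst1 : forall x, W (Wst x) = x).

Local Notation A := (real_part W Wst).
Local Notation S := (sign_symmetry W Wst).
Local Notation N := (op_abs A).
Local Notation P := (pos_proj A).
Local Notation Q := (neg_proj A).
Local Notation F := (null_proj A).

Let linW : linear_op W := adjoint_linear (adjoint_sym WWst).
Let linWst : linear_op Wst := adjoint_linear WWst.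

Let W1 : bounded_by W 1 := isometry_contraction WWst WstW1.
Let Wst1 : bounded_by Wst 1 := isometry_contraction (adjoint_sym WWst) WWst1.

Lemma real_part_selfadjoint : selfadjoint A.
Proof.
move=> x y; rewrite ipZl ipZr conjc_real ipDl ipDr WWst (adjoint_sym WWst).
by rewrite (addrC (ip x (Wst y))).
Qed.

Lemma real_part_contraction : bounded_by A 1.
Proof.
move=> x; rewrite hnormZr ger0_norm ?invr_ge0 // mul1r.
by have := hnormD (W x) (Wst x); have := W1 x; have := Wst1 x; lra.
Qed.

Local Notation sA := real_part_selfadjoint.
Local Notation A1 := real_part_contraction.

Lemma real_part_commute C : linear_op C -> commute_op C W -> commute_op C Wst ->
  commute_op C A.
Proof. by move=> linC CW CWst x; rewrite /real_part (linopZ linC) (linopD linC) CW CWst. Qed.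

Let W_Wst : commute_op W Wst.
Proof. by move=> x; rewrite WWst1 WstW1. Qed.

Let Wst_W : commute_op Wst W.
Proof. by move=> x; rewrite WWst1 WstW1. Qed.

Let half_neq0 : (2^-1)%:C != 0 :> R[i].
Proof. by rewrite eq_complex /= invr_eq0 pnatr_eq0. Qed.

Let skew_on_null x : Wst (F x) = - W (F x).
Proof.
apply/eqP; rewrite -addr_eq0 addrC; apply/eqP/(scalerI half_neq0).
by rewrite scaler0; apply: null_proj_ker sA A1 x.
Qed.

Let linP := pos_proj_linear sA A1.
Let linQ := neg_proj_linear sA A1.
Let linF := null_proj_linear sA A1.

Lemma sign_symmetry_linear : linear_op S.
Proof. exact: linear_opD (linear_opB linP linQ) (linear_opZ _ (linear_op_comp linW linF)). Qed.

Lemma sign_symmetry_bounded : bounded_by S 9.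
Proof.
apply: bounded_by_le (bounded_byD (bounded_byB (pos_proj_bounded sA A1) (neg_proj_bounded sA A1))
  (bounded_byZi (bounded_by_comp ler01 W1 (null_proj_bounded sA A1)))).
by lra.
Qed.

Lemma sign_symmetry_selfadjoint : selfadjoint S.
Proof.
have [_ _ WstF] := sign_decomposition_commute sA A1 linWst Wst1
  (real_part_commute linWst Wst_W (fun x => erefl (Wst (Wst x)))).
move=> x y; rewrite ipDl ipBl ipZl ipDr ipBr ipZr.
rewrite (pos_proj_selfadjoint sA A1) (neg_proj_selfadjoint sA A1) WWst.
by rewrite (null_proj_selfadjoint sA A1) -WstF skew_on_null ipNr conjc_i mulrN mulNr.
Qed.

Let W_A : commute_op W A.
Proof. exact: real_part_commute linW (fun x => erefl (W (W x))) W_Wst. Qed.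

Let null_P x : F (P x) = 0.
Proof. by rewrite /null_proj (pos_proj_id sA A1) (neg_pos_proj sA A1) subrr subr0. Qed.

Let null_Q x : F (Q x) = 0.
Proof. by rewrite /null_proj (neg_proj_id sA A1) (pos_neg_proj sA A1) subr0 subrr. Qed.

Lemma sign_symmetry_pos_proj x : S (P x) = P x.
Proof.
rewrite /sign_symmetry null_P (linop0 linW) scaler0 addr0.
by rewrite (pos_proj_id sA A1) (neg_pos_proj sA A1) subr0.
Qed.

Lemma sign_symmetry_neg_proj x : S (Q x) = - Q x.
Proof.
rewrite /sign_symmetry null_Q (linop0 linW) scaler0 addr0.
by rewrite (neg_proj_id sA A1) (pos_neg_proj sA A1) sub0r.
Qed.

Lemma sign_symmetry_null v : A v = 0 -> S v = 'i *: W v.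
Proof.
move=> Av0; have Fv := null_proj_id sA A1 Av0.
rewrite /sign_symmetry Fv -{1}Fv (pos_null_proj sA A1) -{1}Fv (neg_null_proj sA A1).
by rewrite subrr add0r.
Qed.

Lemma sign_symmetry_involutive x : S (S x) = x.
Proof.
have AWF : A (W (F x)) = 0.
  by rewrite -W_A (null_proj_ker sA A1) (linop0 linW).
have WWF : W (W (F x)) = - F x by rewrite -[W (F x)]opprK -skew_on_null (linopN linW) WWst1.
have linS := sign_symmetry_linear.
rewrite {2}/sign_symmetry (linopD linS) (linopB linS) (linopZ linS).
rewrite sign_symmetry_pos_proj sign_symmetry_neg_proj (sign_symmetry_null AWF) WWF.
rewrite scalerA -expr2 sqr_i scaleN1r !opprK /null_proj.
move: (P x) (Q x) => p q.
by rewrite -(addrA x) -opprD subrKC.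
Qed.


Lemma sign_symmetry_pos_part y : S (pos_part A y) = pos_part A y.
Proof.
by rewrite -{1}(pos_proj_pos_part sA A1 y) sign_symmetry_pos_proj (pos_proj_pos_part sA A1).
Qed.

Lemma sign_symmetry_neg_part y : S (neg_part A y) = - neg_part A y.
Proof.
by rewrite -{1}(neg_proj_neg_part sA A1 y) sign_symmetry_neg_proj (neg_proj_neg_part sA A1).
Qed.

Lemma sign_symmetry_abs y : S (N y) = A y.
Proof.
apply: double_inj; rewrite -(linopD sign_symmetry_linear).
have -> : N y + N y = pos_part A y + neg_part A y.
  by rewrite /pos_part /neg_part [in RHS]addrACA subrr addr0.
rewrite (linopD sign_symmetry_linear) sign_symmetry_pos_part sign_symmetry_neg_part.
by rewrite /pos_part /neg_part opprB addrC subrKA.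
Qed.

Lemma sign_symmetry_real y : S (A y) = N y.
Proof.
apply: double_inj; rewrite -(linopD sign_symmetry_linear).
have -> : A y + A y = pos_part A y - neg_part A y.
  by rewrite /pos_part /neg_part [in RHS]opprB [in RHS]addrC subrKA.
rewrite (linopB sign_symmetry_linear) sign_symmetry_pos_part sign_symmetry_neg_part opprK.
by rewrite /pos_part /neg_part addrACA subrr addr0.
Qed.

Lemma sign_symmetry_commute C c : linear_op C -> bounded_by C c ->
  commute_op C W -> commute_op C Wst -> commute_op C S.
Proof.
move=> linC Cc CW CWst.
have [CP CQ CF] := sign_decomposition_commute sA A1 linC Cc (real_part_commute linC CW CWst).
by move=> x; rewrite /sign_symmetry (linopD linC) (linopB linC) (linopZ linC) CP CQ CW CF.
Qed.

End SignSymmetry.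

Section Intertwining.
Variables U Ust W Wst : H -> H.
Hypotheses (UUst : is_adjoint ip U Ust) (UstU1 : forall x, Ust (U x) = x)
  (UUst1 : forall x, U (Ust x) = x).
Hypotheses (WWst : is_adjoint ip W Wst) (WstW1 : forall x, Wst (W x) = x)
  (WWst1 : forall x, W (Wst x) = x).
Hypothesis conjU : Ust = Wst \o U \o W.

Local Notation A := (real_part W Wst).
Local Notation S := (sign_symmetry W Wst).
Local Notation N := (op_abs A).
Local Notation sA := (real_part_selfadjoint WWst).
Local Notation A1 := (real_part_contraction WWst WstW1 WWst1).

Let linU : linear_op U := adjoint_linear (adjoint_sym UUst).
Let linUst : linear_op Ust := adjoint_linear UUst.

Let U1 : bounded_by U 1 := isometry_contraction UUst UstU1.
Let Ust1 : bounded_by Ust 1 := isometry_contraction (adjoint_sym UUst) UUst1.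

Let conjUst : U = Wst \o Ust \o W.
Proof.
apply: (adjoint_unique (adjoint_sym UUst)); rewrite {1}conjU.
exact: adjoint_comp (adjoint_comp (adjoint_sym WWst) UUst) WWst.
Qed.

Let U_W x : U (W x) = W (Ust x).
Proof. by rewrite conjU /= WWst1. Qed.

Let W_U x : W (U x) = Ust (W x).
Proof. by rewrite conjUst /= WWst1. Qed.

Let U_Wst x : U (Wst x) = Wst (Ust x).
Proof. by rewrite conjUst /= WWst1. Qed.

Let Wst_U x : Wst (U x) = Ust (Wst x).
Proof. by rewrite conjU /= WWst1. Qed.

Let A_U x : A (U x) = Ust (A x).
Proof. by rewrite /real_part W_U Wst_U (linopZ linUst) (linopD linUst). Qed.

Let U_A x : U (A x) = A (Ust x).
Proof. by rewrite /real_part (linopZ linU) (linopD linU) U_W U_Wst. Qed.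

Let U_N : commute_op U N.
Proof. by apply: (op_abs_commute sA A1 linU U1) => x /=; rewrite U_A -A_U. Qed.

Let Ust_N : commute_op Ust N.
Proof. by apply: (op_abs_commute sA A1 linUst Ust1) => x /=; rewrite -A_U U_A. Qed.

Lemma sign_symmetry_intertwines x : S (U x) = Ust (S x).
Proof.
have linS := sign_symmetry_linear WWst WstW1 WWst1.
have Sc := sign_symmetry_bounded WWst WstW1 WWst1.
apply: (sign_decomposition_ext sA A1 (linear_op_comp linS linU) (linear_op_comp linUst linS)
  (bounded_by_comp (ler0n _ 9) Sc U1) (bounded_by_comp ler01 Ust1 Sc)) => [y|y|v Av0] /=.
- by rewrite U_N (sign_symmetry_abs WWst WstW1 WWst1) A_U (sign_symmetry_abs WWst WstW1 WWst1).
- by rewrite U_A !(sign_symmetry_real WWst WstW1 WWst1) Ust_N.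
have AUv0 : A (U v) = 0 by rewrite A_U Av0 (linop0 linUst).
rewrite (sign_symmetry_null WWst WstW1 WWst1 AUv0) (sign_symmetry_null WWst WstW1 WWst1 Av0).
by rewrite W_U (linopZ linUst).
Qed.

End Intertwining.

Lemma unitary_inverse T T' : op_unitary ip T -> is_adjoint ip T T' ->
  (forall x, T' (T x) = x) /\ (forall x, T (T' x) = x).
Proof.
move=> [_ [T'' [TT'' [T''T TT''1]]]] TT'; rewrite (adjoint_unique TT' TT'').
by split=> x; [exact: (congr1 (fun f => f x) T''T) | exact: (congr1 (fun f => f x) TT''1)].
Qed.

Lemma op_symmetry_intro S : is_bounded_op ip S -> selfadjoint S ->
  (forall x, S (S x) = x) -> op_symmetry ip S.
Proof.
move=> bS sS SS; split=> //; split=> //; exists S.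
by split=> //; split; apply: functional_extensionality.
Qed.

Lemma symmetry_product_conj U Ust S1 S2 : is_adjoint ip U Ust ->
  op_symmetry ip S1 -> op_symmetry ip S2 -> U = S1 \o S2 -> Ust = S1 \o U \o S1.
Proof.
move=> UUst [uS1 sS1] [_ sS2] US; have [S1S1 _] := unitary_inverse uS1 sS1.
have US21 : is_adjoint ip U (S2 \o S1) by rewrite US; exact: adjoint_comp sS1 sS2.
rewrite (adjoint_unique UUst US21) US.
by apply: functional_extensionality => x /=; rewrite S1S1.
Qed.

Section VonNeumannAlgebra.
Variable M : (H -> H) -> Prop.
Hypothesis hM : is_von_neumann_algebra ip M.

Lemma vna_bounded T : M T -> is_bounded_op ip T.
Proof. by case: hM => + _ => /[apply] -[]. Qed.

Lemma vna_adjoint T T' : M T -> is_adjoint ip T T' -> M T'.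
Proof.
move=> MT TT'; have [_ [T'' [TT'' MT'']]] := hM.1 T MT.
by rewrite (adjoint_unique TT' TT'').
Qed.

Lemma vna_commutant T C : M T -> commutant ip M C -> commute_op C T.
Proof. by move=> MT [_ CM] x; have := congr1 (fun f => f x) (CM T MT). Qed.

Lemma vna_bicommutant T : is_bounded_op ip T ->
  (forall C, commutant ip M C -> commute_op C T) -> M T.
Proof.
move=> bT CT; apply/(hM.2 T); split=> // C MC.
by apply: functional_extensionality => x /=; rewrite CT.
Qed.

Lemma vna_comp A B : M A -> M B -> M (A \o B).
Proof.
move=> MA MB; have [linA [a Aa]] := vna_bounded MA; have [linB [b Bb]] := vna_bounded MB.
apply: vna_bicommutant => [|C MC x /=].
  have [a' a'_ge0 Aa'] := bounded_by_ge0 Aa.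
  by split; [exact: linear_op_comp | exists (a' * b); exact: bounded_by_comp].
by rewrite (vna_commutant MA MC) (vna_commutant MB MC).
Qed.

Lemma vna_sign_symmetry W Wst : M W -> is_adjoint ip W Wst ->
  (forall x, Wst (W x) = x) -> (forall x, W (Wst x) = x) -> M (sign_symmetry W Wst).
Proof.
move=> MW WWst WstW WWst1; apply: vna_bicommutant.
  split; first exact: sign_symmetry_linear WWst WstW WWst1.
  by exists 9; apply: sign_symmetry_bounded.
move=> C MC; have [[linC [c Cc]] _] := MC.
apply: (sign_symmetry_commute WWst WstW WWst1 linC Cc); first exact: vna_commutant MW MC.
exact: vna_commutant (vna_adjoint MW WWst) MC.
Qed.

Lemma vna_symmetry_factorization U Ust W Wst :
  M U -> op_unitary ip U -> is_adjoint ip U Ust ->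
  M W -> op_unitary ip W -> is_adjoint ip W Wst -> Ust = Wst \o U \o W ->
  exists S1 S2 : H -> H,
    [/\ M S1, M S2, op_symmetry ip S1, op_symmetry ip S2 & U = S1 \o S2].
Proof.
move=> MU uU UUst MW uW WWst conjU.
have [UstU UUst1] := unitary_inverse uU UUst.
have [WstW WWst1] := unitary_inverse uW WWst.
have MS := vna_sign_symmetry MW WWst WstW WWst1.
have sS := sign_symmetry_selfadjoint WWst WstW WWst1.
have SS := sign_symmetry_involutive WWst WstW WWst1.
have SU := sign_symmetry_intertwines UUst UstU UUst1 WWst WstW WWst1 conjU.
exists (sign_symmetry W Wst), (sign_symmetry W Wst \o U); split.
- exact: MS.
- exact: vna_comp.
- exact: op_symmetry_intro (vna_bounded MS) sS SS.
- apply: op_symmetry_intro (vna_bounded (vna_comp MS MU)) _ _ => [x y|x] /=.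
    by rewrite sS UUst -SU.
  by rewrite SU SS UstU.
- by apply: functional_extensionality => x /=; rewrite SS.
Qed.

End VonNeumannAlgebra.

End HilbertSpace.

Theorem proposition4p1 (R : realType) (H : lmodType R[i])
    (ip : H -> H -> R[i]) (M : (H -> H) -> Prop)
    (hH : is_hilbert_space ip) (hM : is_von_neumann_algebra ip M)
    (U Ustar : H -> H) (hUM : M U) (hU : op_unitary ip U)
    (hUstar : is_adjoint ip U Ustar) :
  (exists S1 S2 : H -> H,
      [/\ M S1, M S2, op_symmetry ip S1, op_symmetry ip S2 & U = S1 \o S2])
  <->
  (exists W : H -> H,
      [/\ M W, op_unitary ip W &
          exists Wstar : H -> H, is_adjoint ip W Wstar /\ Ustar = Wstar \o U \o W]).
Proof.
split.
- move=> [S1 [S2 [MS1 _ symS1 symS2 US]]]; exists S1; split=> //; first exact: symS1.1.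
  by exists S1; split; [exact: symS1.2 | exact (symmetry_product_conj hH hUstar symS1 symS2 US)].
- move=> [W [MW uW [Wstar [WWstar conjU]]]].
  exact (vna_symmetry_factorization hH hM hUM hU hUstar MW uW WWstar conjU).
Qed.
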